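(* Let $A$ be a finite alphabet and $n\ge 1$. Then: (a) there exist $A$, $n$ and a weakly regular $P\subseteq (A^\ast)^n$ whose complement $(A^\ast)^n\setminus P$ is not weakly regular; (b) for all weakly regular $P,Q\subseteq (A^\ast)^n$, the union $P\cup Q$ is weakly regular; (c) there exist $A$, $n$ and weakly regular $P,Q\subseteq(A^\ast)^n$ such that $P\cap Q$ is not weakly regular; (d) for every $n\ge2$ and every weakly regular $P\subseteq (A^\ast)^n$, the language $\{(x_2,\ldots,x_n):(\exists x_1\in A^\ast)(x_1,\ldots,x_n)\in P\}$ is weakly regular; (e) there exist $A$, $n\ge 2$ and a weakly regular $P\subseteq(A^\ast)^n$ such that $\{(x_2,\ldots,x_n):(\forall x_1\in A^\ast)(x_1,\ldots,x_n)\in P\}$ is not weakly regular.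
   Context: An $n$-variable language (predicate) over a finite alphabet $A$ is a subset of $(A^\ast)^n$, $A^\ast$ the set of finite words over $A$. A shuffle of $(w_1,\ldots,w_n)$ is an ordering of all the letters of the $w_i$ respecting the order within each $w_i$; $w\$$ denotes $w$ followed by a new symbol $\$$. Weakly regular: $L$ is weakly regular if it is accepted by an $n$-tape non-deterministic semi-sorted asynchronous automaton, i.e., a non-deterministic finite state automaton over $A\sqcup\{\$\}$ (possibly several start states and $\epsilon$-transitions) with a partition of its states into sets $S_1,\ldots,S_n$; it accepts $(w_1,\ldots,w_n)$ iff there is a path from a start state to an accept state reading a shuffle of $(w_1\$,\ldots,w_n\$)$, where a letter-labelled transition out of a state in $S_i$ reads the next letter of the $i$-th tape ($\epsilon$-transitions read nothing). *)

From mathcomp Require Import all_boot.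
Set Implicit Arguments. Unset Strict Implicit. Unset Printing Implicit Defensive.

Definition lang (A : finType) (n : nat) := ('I_n -> seq A) -> Prop.

(* Letters of A ⊔ {$} are encoded as option A (Some a = a, None = $).
   [tape q] says which block S_i of the partition the state q belongs to. *)
Record nssa (A : finType) (n : nat) := NSSA {
  st : finType;
  start : pred st;
  accept : pred st;
  tape : st -> 'I_n;
  eps : rel st;
  trans : st -> option A -> st -> bool
}.
Arguments st {A n}. Arguments start {A n}. Arguments accept {A n}.
Arguments tape {A n}. Arguments eps {A n}. Arguments trans {A n}.

Definition config A n (M : nssa A n) := (st M * ('I_n -> seq (option A)))%type.

Inductive step A n (M : nssa A n) : config M -> config M -> Prop :=
| step_eps q q' r : eps M q q' -> step (q, r) (q', r)
| step_letter q q' r c rest :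
    trans M q c q' -> r (tape M q) = c :: rest ->
    step (q, r) (q', fun i => if i == tape M q then rest else r i).

Inductive reach A n (M : nssa A n) : config M -> config M -> Prop :=
| reach_refl c : reach c c
| reach_step c1 c2 c3 : step c1 c2 -> reach c2 c3 -> reach c1 c3.

Definition tape_input A n (w : 'I_n -> seq A) : 'I_n -> seq (option A) :=
  fun i => rcons (map Some (w i)) None.

Definition accepts A n (M : nssa A n) (w : 'I_n -> seq A) : Prop :=
  exists q0 qf, start M q0 /\ accept M qf /\
    reach (q0, tape_input w) (qf, fun _ => [::]).

Definition weakly_regular A n (P : lang A n) : Prop :=
  exists M : nssa A n, forall w, P w <-> accepts M w.

Definition fcons A n (x1 : seq A) (x : 'I_n -> seq A) : 'I_n.+1 -> seq A :=
  fun i => match unlift ord0 i with None => x1 | Some j => x j end.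

(* Union is realised by the disjoint sum of two automata.  For existential projection the
   new automaton guesses the hidden first tape: its moves there become epsilon-moves, and a
   flag records whether its end marker has been guessed.
   On a single tape, an accepting run on u ++ v can be cut when the tape holds v$, so the
   set of states reachable after reading u decides acceptance of every u ++ v; by
   pigeonhole the language {y : #1 y = #0 y} is not weakly regular.  Intersection fails
   because {(x, y) : |x| = #1 y} and {(x, y) : |x| = #0 y} are weakly regular while the
   projection of their intersection is {y : #1 y = #0 y}.  Universal projection fails
   because (forall x, |x| = #1 y \/ |x| <> #0 y) holds iff #1 y = #0 y.  Complement fails,
   since together with union it would give intersection. *)
From Stdlib Require Import Classical ClassicalEpsilon FunctionalExtensionality.
From mathcomp Require Import all_boot zify.
Set Implicit Arguments. Unset Strict Implicit. Unset Printing Implicit Defensive.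

Lemma catsI (T : Type) (s s1 s2 : seq T) : s1 ++ s = s2 ++ s -> s1 = s2.
Proof.
elim: s1 s2 => [|a s1 IH] [|b s2] //= E;
  try by have := congr1 size E; rewrite /= size_cat; lia.
by case: E => -> /IH ->.
Qed.

Definition upd T n (r : 'I_n -> T) (i : 'I_n) (s : T) : 'I_n -> T :=
  fun j => if j == i then s else r j.

Lemma upd_upd T n (r : 'I_n -> T) i s s' : upd (upd r i s) i s' = upd r i s'.
Proof. by apply: functional_extensionality => j; rewrite /upd; case: (j == i). Qed.

Lemma upd_comm T n (r : 'I_n -> T) i j s s' : i != j ->
  upd (upd r i s) j s' = upd (upd r j s') i s.
Proof.
move=> ij; apply: functional_extensionality => k; rewrite /upd.
by case: (eqVneq k j) => [->|//]; rewrite eq_sym (negbTE ij).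
Qed.

Section Runs.
Variables (A : finType) (n : nat) (M : nssa A n).

Lemma reach_trans (c1 c2 c3 : config M) : reach c1 c2 -> reach c2 c3 -> reach c1 c3.
Proof. by elim=> // c c' c'' Hs _ IH /IH; apply: reach_step. Qed.

Lemma reach_eps q q' r (c : config M) : eps M q q' -> reach (q', r) c -> reach (q, r) c.
Proof. by move=> He; apply: reach_step; apply: step_eps. Qed.

Lemma reach_letter q q' r ch rest (c : config M) :
  trans M q ch q' -> r (tape M q) = ch :: rest ->
  reach (q', upd r (tape M q) rest) c -> reach (q, r) c.
Proof. by move=> Ht Hr; apply: reach_step; apply: step_letter Ht Hr. Qed.

Lemma reach_backward (I : config M -> Prop) (c1 c2 : config M) :
  (forall c c', step c c' -> I c' -> I c) -> reach c1 c2 -> I c2 -> I c1.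
Proof. by move=> HI; elim=> // c c' c'' Hs _ IH /IH; apply: HI. Qed.

Lemma reach_suffix (c1 c2 : config M) : reach c1 c2 ->
  forall i, exists u, c1.2 i = u ++ c2.2 i.
Proof.
elim=> {c1 c2} [c|c1 c2 c3 Hs _ IH] i; first by exists [::].
have [v Hv] := IH i.
case: Hs Hv => [q q' r _|q q' r ch rest _ Hr] /= Hv; first by exists v.
by case: ifP Hv => [/eqP -> Hv|_ Hv]; [exists (ch :: v); rewrite Hr Hv | exists v].
Qed.

(* A run never looks past the end of the part of a tape it consumes. *)
Lemma reach_replace_rest (c1 c2 : config M) : reach c1 c2 ->
  forall i u z, c1.2 i = u ++ c2.2 i ->
  reach (c1.1, upd c1.2 i (u ++ z)) (c2.1, upd c2.2 i z).
Proof.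
elim=> {c1 c2} [[q r]|c1 c2 c3 Hs Hr IH] i u z /=.
  by move/esym/(@catsI _ _ _ [::]) ->; apply: reach_refl.
have [v Hv] := reach_suffix Hr i.
case: Hs Hr IH Hv => [q q' r He|q q' r ch rest Ht Hrr] /= Hr IH Hv E.
  rewrite Hv in E; rewrite -(catsI E); apply: reach_eps He _; exact: IH.
case: (eqVneq i (tape M q)) Hv E => [->|Ni] /=; rewrite ?eqxx ?(negbTE Ni) => Hv E.
- rewrite Hrr Hv -cat_cons in E; rewrite -(catsI E).
  apply: (reach_letter (rest := v ++ z) Ht); first by rewrite /upd eqxx.
  by rewrite upd_upd -(upd_upd r _ rest); apply: (IH _ v z); rewrite eqxx.
- rewrite Hv in E; rewrite -(catsI E).
  apply: (reach_letter (rest := rest) Ht); first by rewrite /upd eq_sym (negbTE Ni).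
  by rewrite upd_comm //; apply: (IH i v z); rewrite (negbTE Ni).
Qed.

Lemma reach_cut (c1 c2 : config M) : reach c1 c2 -> forall i u s,
  c1.2 i = u ++ s -> (exists v, s = v ++ c2.2 i) ->
  exists c : config M, [/\ c.2 i = s, reach c1 c & reach c c2].
Proof.
elim=> {c1 c2} [c|c1 c2 c3 Hs Hr IH] i u s E [v Hv].
  rewrite Hv catA in E; have := @catsI _ _ _ [::] (esym E).
  case: u {E} => [|//]; case: v Hv => [|//] /= -> _.
  by exists c; split => //; apply: reach_refl.
case: u E => [|a u] E.
  by exists c1; split => //; [apply: reach_refl | apply: reach_step Hs Hr].
suff [c [Hc R1 R2]] : exists c : config M, [/\ c.2 i = s, reach c2 c & reach c c3].
  by exists c; split => //; apply: reach_step Hs R1.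
case: Hs E IH {Hr} => [q q' r _|q q' r ch rest _ Hrr] /= E IH.
  exact: IH i (a :: u) s E (ex_intro _ v Hv).
apply: (IH i (if i == tape M q then u else a :: u) s _ (ex_intro _ v Hv)).
by case: eqP E => [->|_]; rewrite ?Hrr //= => -[_ ->].
Qed.
End Runs.
Arguments reach_replace_rest {A n M c1 c2} _ i u z.

Section Embedding.
Variables (A : finType) (n : nat) (M N : nssa A n) (f : st M -> st N).
Hypotheses (tape_f : forall q, tape N (f q) = tape M q)
  (eps_f : forall q q', eps N (f q) (f q') = eps M q q')
  (trans_f : forall q c q', trans N (f q) c (f q') = trans M q c q')
  (eps_image : forall q s, eps N (f q) s -> exists q', s = f q')
  (trans_image : forall q c s, trans N (f q) c s -> exists q', s = f q').

Lemma reach_embed (c1 c2 : config M) : reach c1 c2 -> reach (f c1.1, c1.2) (f c2.1, c2.2).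
Proof.
elim=> {c1 c2} [c|c1 c2 c3 Hs _ IH]; first exact: reach_refl.
case: Hs IH => [q q' r He|q q' r ch rest Ht Hr] IH.
  by apply: (reach_eps (q' := f q')); rewrite ?eps_f.
by apply: (reach_letter (q' := f q') (ch := ch) (rest := rest)); rewrite /= ?trans_f ?tape_f.
Qed.

Lemma reach_unembed (c1 c2 : config N) : reach c1 c2 -> forall q, c1.1 = f q ->
  exists2 q', c2.1 = f q' & reach (q, c1.2) (q', c2.2).
Proof.
elim=> {c1 c2} [[s r]|c1 c2 c3 Hs _ IH] q /= Hq; first by exists q => //; apply: reach_refl.
case: Hs IH Hq => [s s' r He|s s' r ch rest Ht Hr] IH /= Eq; subst s.
  have [q' Eq'] := eps_image He; subst s'; rewrite eps_f in He.
  by have [qf ? R] := IH q' erefl; exists qf => //; apply: reach_eps He R.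
have [q' Eq'] := trans_image Ht; subst s'; rewrite trans_f in Ht.
have [qf ? R] := IH q' erefl; exists qf => //.
by apply: (reach_letter (rest := rest) Ht); rewrite -?tape_f.
Qed.
End Embedding.

Section Union.
Variables (A : finType) (n : nat) (M1 M2 : nssa A n).

Definition union_nssa : nssa A n := @NSSA A n (st M1 + st M2)%type
  (fun s => match s with inl q => start M1 q | inr q => start M2 q end)
  (fun s => match s with inl q => accept M1 q | inr q => accept M2 q end)
  (fun s => match s with inl q => tape M1 q | inr q => tape M2 q end)
  (fun s s' => match s, s' with
    | inl q, inl q' => eps M1 q q' | inr q, inr q' => eps M2 q q' | _, _ => false end)
  (fun s c s' => match s, s' with
    | inl q, inl q' => trans M1 q c q' | inr q, inr q' => trans M2 q c q' | _, _ => false end).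

Lemma reach_union_l q r (c : config union_nssa) : reach ((inl q, r) : config union_nssa) c ->
  exists2 q', c.1 = inl q' & reach (M := M1) (q, r) (q', c.2).
Proof.
move/(@reach_unembed _ _ M1 union_nssa inl); apply=> //.
  by move=> ? [q'|//]; exists q'.
by move=> ? ? [q'|//]; exists q'.
Qed.

Lemma reach_union_r q r (c : config union_nssa) : reach ((inr q, r) : config union_nssa) c ->
  exists2 q', c.1 = inr q' & reach (M := M2) (q, r) (q', c.2).
Proof.
move/(@reach_unembed _ _ M2 union_nssa inr); apply=> //.
  by move=> ? [//|q']; exists q'.
by move=> ? ? [//|q']; exists q'.
Qed.

Lemma accepts_union w : accepts union_nssa w <-> accepts M1 w \/ accepts M2 w.
Proof.
split.
- move=> [[q0|q0] [qf [Hs [Ha /=]]]].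
  + by case/reach_union_l => q' /= Eq R; rewrite Eq in Ha; left; exists q0, q'.
  + by case/reach_union_r => q' /= Eq R; rewrite Eq in Ha; right; exists q0, q'.
- move=> [[q0 [qf [Hs [Ha Hr]]]]|[q0 [qf [Hs [Ha Hr]]]]].
  + exists (inl q0), (inl qf); do 2!split => //.
    exact: (reach_embed (N := union_nssa) (f := inl)) Hr.
  + exists (inr q0), (inr qf); do 2!split => //.
    exact: (reach_embed (N := union_nssa) (f := inr)) Hr.
Qed.
End Union.

Lemma weakly_regular_ext (A : finType) n (P Q : lang A n) :
  (forall w, P w <-> Q w) -> weakly_regular P -> weakly_regular Q.
Proof. by move=> E [M HM]; exists M => w; rewrite -E. Qed.

Lemma weakly_regular_or (A : finType) n (P Q : lang A n) :
  weakly_regular P -> weakly_regular Q -> weakly_regular (fun w => P w \/ Q w).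
Proof. by move=> [M1 H1] [M2 H2]; exists (union_nssa M1 M2) => w; rewrite accepts_union H1 H2. Qed.

Definition enc (A : Type) (x : seq A) : seq (option A) := rcons (map Some x) None.

Lemma enc_inj (A : Type) : injective (@enc A).
Proof. by move=> x y /rcons_inj [] /(inj_map (@Some_inj _)). Qed.

Lemma enc0 (A : Type) : enc [::] = [:: None :> option A].
Proof. by []. Qed.

Lemma encS (A : Type) (a : A) x : enc (a :: x) = Some a :: enc x.
Proof. by []. Qed.

Lemma enc_cat (A : Type) (u v : seq A) : enc (u ++ v) = map Some u ++ enc v.
Proof. by rewrite /enc map_cat rcons_cat. Qed.

Section Fcons.
Variables (T : Type) (m : nat).

Lemma fcons0 (s : seq T) (r : 'I_m -> seq T) : fcons s r ord0 = s.
Proof. by rewrite /fcons unlift_none. Qed.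

Lemma fconsS (s : seq T) (r : 'I_m -> seq T) j : fcons s r (lift ord0 j) = r j.
Proof. by rewrite /fcons liftK. Qed.

Definition ftail (R : 'I_m.+1 -> seq T) : 'I_m -> seq T := fun j => R (lift ord0 j).

Lemma ftail_fcons (s : seq T) (r : 'I_m -> seq T) : ftail (fcons s r) = r.
Proof. by apply: functional_extensionality => j; rewrite /ftail fconsS. Qed.

Lemma fcons_nil : fcons [::] (fun _ : 'I_m => [::]) = (fun _ => [::] : seq T).
Proof. by apply: functional_extensionality => i; rewrite /fcons; case: unlift. Qed.

Lemma upd_fcons0 (s s' : seq T) (r : 'I_m -> seq T) : upd (fcons s r) ord0 s' = fcons s' r.
Proof.
apply: functional_extensionality => i; rewrite /upd /fcons.
by case: unliftP => [j ->|->]; rewrite ?eqxx // eq_sym (negbTE (neq_lift _ _)).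
Qed.

Lemma upd_fconsS (s s' : seq T) (r : 'I_m -> seq T) j :
  upd (fcons s r) (lift ord0 j) s' = fcons s (upd r j s').
Proof.
apply: functional_extensionality => i; rewrite /upd /fcons.
by case: unliftP => [k ->|->]; rewrite ?(inj_eq lift_inj) // (negbTE (neq_lift _ _)).
Qed.
End Fcons.

Lemma tape_input_fcons (A : finType) m (x1 : seq A) (x : 'I_m -> seq A) :
  tape_input (fcons x1 x) = fcons (enc x1) (tape_input x).
Proof. by apply: functional_extensionality => i; rewrite /tape_input /fcons; case: unliftP. Qed.

(* What is left of the hidden tape, before ([false]) or after ([true]) its end marker
   has been guessed. *)
Definition hidden_rest (A : Type) (b : bool) (s : seq (option A)) : Prop :=
  if b then s = [::] else exists x, s = enc x.

Lemma hidden_rest_cons (A : eqType) (ch : option A) s :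
  hidden_rest false (ch :: s) <-> hidden_rest (ch == None) s.
Proof.
split.
  by case=> -[|a x] /=; rewrite /enc /= => -[-> ->] //; exists x.
by case: ch => [a [x ->]|->] /=; [exists (a :: x) | exists [::]].
Qed.

Section Projection.
Variables (A : finType) (m : nat) (M : nssa A m.+2).

(* Moves on the hidden tape 0 become epsilon-moves.  States reading tape 0 still need a
   tape of the projected automaton: they get the arbitrary [ord0], so at least one tape
   must remain. *)
Definition proj_nssa : nssa A m.+1 := @NSSA A m.+1 (st M * bool)%type
  (fun s => start M s.1 && ~~ s.2)
  (fun s => accept M s.1 && s.2)
  (fun s => if unlift ord0 (tape M s.1) is Some j then j else ord0)
  (fun s s' => (eps M s.1 s'.1 && (s'.2 == s.2)) ||
     [&& tape M s.1 == ord0, ~~ s.2 &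
        [exists c, trans M s.1 c s'.1 && (s'.2 == (c == None))]])
  (fun s c s' => [&& tape M s.1 != ord0, trans M s.1 c s'.1 & s'.2 == s.2]).

Lemma proj_tape q b j : tape M q = lift ord0 j -> tape proj_nssa (q, b) = j.
Proof. by move=> Ej; rewrite /= Ej liftK. Qed.

Lemma reach_proj (c1 c2 : config M) : reach c1 c2 -> c2.2 = (fun _ => [::]) ->
  forall b, hidden_rest b (c1.2 ord0) ->
  reach (M := proj_nssa) ((c1.1, b), ftail c1.2) ((c2.1, true), fun _ => [::]).
Proof.
elim=> {c1 c2} [[q R]|c1 c2 c3 Hs _ IH] /= E3 b Hb.
  by subst R; case: b Hb => [_|[x /esym/(congr1 size)]]; rewrite ?size_rcons //; apply: reach_refl.
case: Hs IH Hb => [q q' R He|q q' R ch rest Ht Hrr] IH Hb.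
  by apply: (@reach_eps _ _ proj_nssa _ (q', b)); [rewrite /= He eqxx | apply: IH].
case: (unliftP ord0 (tape M q)) => [j Ej|Ej].
  apply: (@reach_letter _ _ proj_nssa (q, b) (q', b) _ ch rest).
  - by rewrite /= Ej eq_sym neq_lift Ht eqxx.
  - by rewrite (proj_tape _ Ej) /ftail -Ej.
  - rewrite (proj_tape _ Ej); have -> : upd (ftail R) j rest = ftail (upd R (tape M q) rest).
      by apply: functional_extensionality => k; rewrite /upd /ftail Ej (inj_eq lift_inj).
    by apply: IH; rewrite //= /upd Ej (negbTE (neq_lift _ _)).
rewrite Ej in Hrr; case: b Hb => /= Hb; first by rewrite Hb in Hrr.
apply: (@reach_eps _ _ proj_nssa _ (q', ch == None)).
  by rewrite /= Ej eqxx /=; apply/orP; right; apply/existsP; exists ch; rewrite Ht eqxx.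
have -> : ftail R = ftail (upd R (tape M q) rest).
  by apply: functional_extensionality => k; rewrite /upd /ftail Ej eq_sym (negbTE (neq_lift _ _)).
by apply: IH; rewrite //= /upd Ej eqxx -hidden_rest_cons -Hrr.
Qed.

Lemma reach_unproj (c1 c2 : config proj_nssa) : reach c1 c2 ->
  c2.2 = (fun _ => [::]) -> accept proj_nssa c2.1 ->
  exists2 s, hidden_rest c1.1.2 s & exists2 qf, accept M qf &
    reach (M := M) (c1.1.1, fcons s c1.2) (qf, fun _ => [::]).
Proof.
elim=> {c1 c2} [[[q b] r]|c1 c2 c3 Hs _ IH] /= E3 Ha.
  subst r; case/andP: Ha => Ha /= ->; exists [::] => //; exists q => //.
  by rewrite fcons_nil; apply: reach_refl.
have [s0 Hg [qf Hqf R]] := IH E3 Ha.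
case: Hs Hg R => [[q b] [q' b'] r He|[q b] [q' b'] r ch rest Ht Hrr] /= Hg R.
  move: He => /= /orP [/andP [He /eqP Eb]|/and3P [/eqP Et Nb /existsP [ch /andP [Ht /eqP Eb]]]].
    by subst b'; exists s0 => //; exists qf => //; apply: reach_eps He R.
  rewrite (negbTE Nb); exists (ch :: s0); first by rewrite hidden_rest_cons -Eb.
  exists qf => //; apply: (reach_letter (rest := s0) Ht); rewrite Et ?fcons0 //.
  by rewrite upd_fcons0.
move: Ht => /= /and3P [Nt Ht /eqP Eb]; subst b'; exists s0 => //; exists qf => //.
case: (unliftP ord0 (tape M q)) Nt Hrr => [j Ej _|-> //]; rewrite (proj_tape _ Ej) => Hrr.
apply: (reach_letter (rest := rest) Ht); first by rewrite Ej fconsS.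
by rewrite Ej upd_fconsS; move: R; rewrite Ej liftK.
Qed.

Lemma accepts_proj x : accepts proj_nssa x <-> exists x1, accepts M (fcons x1 x).
Proof.
split.
  move=> [[q0 b0] [qf [Hs [Ha Hr]]]]; case/andP: Hs => Hs /= /negbTE Hb.
  have [s Hhid [qf' Hqf R]] := reach_unproj Hr erefl Ha.
  move: Hhid; rewrite /= Hb => -[x1 Ex].
  by exists x1, q0, qf'; rewrite tape_input_fcons -Ex.
move=> [x1 [q0 [qf [Hs [Ha Hr]]]]].
exists (q0, false), (qf, true); rewrite /= Hs Ha; do 2!split => //.
rewrite -(ftail_fcons (enc x1) (tape_input x)) -tape_input_fcons.
by apply: (reach_proj Hr) => //=; rewrite tape_input_fcons fcons0; exists x1.
Qed.
End Projection.

Lemma weakly_regular_exists (A : finType) n : 1 <= n ->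
  forall P : lang A n.+1, weakly_regular P ->
  weakly_regular (fun x : 'I_n -> seq A => exists x1, P (fcons x1 x)).
Proof.
case: n => // m _ P [M HM]; exists (proj_nssa M) => x; rewrite accepts_proj.
by split=> -[x1 /HM]; exists x1.
Qed.

Definition asbool (P : Prop) : bool := if excluded_middle_informative P then true else false.

Lemma asboolP (P : Prop) : reflect P (asbool P).
Proof. by rewrite /asbool; case: excluded_middle_informative => H; constructor. Qed.

Lemma upd1 T (r : 'I_1 -> T) s : upd r ord0 s = fun _ => s.
Proof. by apply: functional_extensionality => i; rewrite /upd (ord1 i) eqxx. Qed.

Section OneTape.
Variables (A : finType) (M : nssa A 1).

Definition prefix_states (u : seq A) : {set st M} :=
  [set p | asbool (exists2 q0, start M q0 &
    reach (q0, fun _ : 'I_1 => map Some u) (p, fun _ => [::]))].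

(* Myhill-Nerode: cut an accepting run on [u1 ++ v] where the tape holds [enc v]. *)
Lemma prefix_states_accepts u1 u2 v : prefix_states u1 = prefix_states u2 ->
  accepts M (fun _ => u1 ++ v) -> accepts M (fun _ => u2 ++ v).
Proof.
move=> Eu [q0 [qf [Hs [Ha Hr]]]].
have input u : tape_input (fun _ : 'I_1 => u ++ v) = fun _ => map Some u ++ enc v.
  by apply: functional_extensionality => i; rewrite -enc_cat.
rewrite input in Hr.
have [[p r] [/= Hp R1 R2]] := reach_cut Hr (i := ord0) erefl (ex_intro _ (enc v) (esym (cats0 _))).
have := reach_replace_rest R1 ord0 (map Some u1) [::].
rewrite /= Hp !upd1 cats0 => /(_ erefl) R1'.
have : p \in prefix_states u1 by rewrite inE; apply/asboolP; exists q0.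
rewrite Eu inE => /asboolP [q0' Hs' R].
have := reach_replace_rest R ord0 (map Some u2) (enc v).
rewrite /= cats0 !upd1 => /(_ erefl) R'.
exists q0', qf; do 2!split => //; rewrite input.
have Er : r = fun _ => enc v by apply: functional_extensionality => i; rewrite (ord1 i).
by apply: reach_trans R' _; rewrite -Er.
Qed.
End OneTape.

Lemma nat_fun_collision (T : finType) (f : nat -> T) : exists i j, i <> j /\ f i = f j.
Proof.
apply: NNPP => Hinj.
have inj : injective (fun k : 'I_#|T|.+1 => f k).
  by move=> x y Exy; apply: val_inj; apply: NNPP => Nxy; apply: Hinj; exists x, y.
by have := leq_card _ inj; rewrite card_ord ltnn.
Qed.

Definition balanced (y : 'I_1 -> seq bool) := count id (y ord0) = count negb (y ord0).

Lemma balanced_not_weakly_regular : ~ weakly_regular balanced.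
Proof.
move=> [M HM].
have [i [j [Nij Eij]]] := nat_fun_collision (fun k => prefix_states M (nseq k false)).
have /HM : balanced (fun _ => nseq i false ++ nseq i true).
  by rewrite /balanced !count_cat !count_nseq /=; lia.
move/(prefix_states_accepts Eij)/HM; rewrite /balanced !count_cat !count_nseq /=; lia.
Qed.

Definition tape1 : 'I_2 := @Ordinal 2 1 isT.

Definition tapes2 T (s0 s1 : T) : 'I_2 -> T := fun i => if i == ord0 then s0 else s1.

Lemma tape_input2 (A : finType) (w : 'I_2 -> seq A) :
  tape_input w = tapes2 (enc (w ord0)) (enc (w tape1)).
Proof.
apply: functional_extensionality => -[[|[|//]] Hi];
  by rewrite /tapes2 /tape_input /=; congr (enc (w _)); apply: val_inj.
Qed.

Lemma tapes2_nil T : tapes2 ([::] : seq T) [::] = fun _ => [::].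
Proof. by apply: functional_extensionality => i; rewrite /tapes2; case: (i == ord0). Qed.

Lemma upd_tapes2_0 T (s0 s1 s : T) : upd (tapes2 s0 s1) ord0 s = tapes2 s s1.
Proof. by apply: functional_extensionality => i; rewrite /upd /tapes2; case: (i == ord0). Qed.

Lemma upd_tapes2_1 T (s0 s1 s : T) : upd (tapes2 s0 s1) tape1 s = tapes2 s0 s.
Proof. by apply: functional_extensionality => -[[|[|//]] Hi]. Qed.

Section TwoTapes.
Variables (A : finType) (M : nssa A 2).

Lemma reach_read0 q q' ch s0 s1 (c : config M) : tape M q = ord0 -> trans M q ch q' ->
  reach (q', tapes2 s0 s1) c -> reach (q, tapes2 (ch :: s0) s1) c.
Proof. by move=> Eq Ht R; apply: (reach_letter (rest := s0) Ht); rewrite Eq ?upd_tapes2_0. Qed.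

Lemma reach_read1 q q' ch s0 s1 (c : config M) : tape M q = tape1 -> trans M q ch q' ->
  reach (q', tapes2 s0 s1) c -> reach (q, tapes2 s0 (ch :: s1)) c.
Proof. by move=> Eq Ht R; apply: (reach_letter (rest := s1) Ht); rewrite Eq ?upd_tapes2_1. Qed.
End TwoTapes.
Arguments reach_read0 {A M q} q' {ch s0 s1 c}.
Arguments reach_read1 {A M q} q' {ch s0 s1 c}.

Section CountEq.
Variable b : bool.
Local Notation s k := (@Ordinal 4 k isT).

(* State 0 scans y; each [b] sends it to state 1, which consumes one letter of x. *)
Definition size_eq_count_nssa : nssa bool 2 := @NSSA bool 2 'I_4
  (fun q => val q == 0) (fun q => val q == 3)
  (fun q => if val q == 0 then tape1 else ord0) (fun _ _ => false)
  (fun q c q' => match val q, c, val q' with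
    | 0, Some a, 0 => a != b
    | 0, Some a, 1 => a == b
    | 0, None, 2 => true
    | 1, Some _, 0 => true
    | 2, None, 3 => true
    | _, _, _ => false end).

Definition size_eq_count (w : 'I_2 -> seq bool) := size (w ord0) = count (pred1 b) (w tape1).

Definition size_eq_count_inv (c : config size_eq_count_nssa) : Prop :=
  let s0 := c.2 ord0 in let s1 := c.2 tape1 in
  match val c.1 with
  | 0 => exists x y, [/\ s0 = enc x, s1 = enc y & size x = count (pred1 b) y]
  | 1 => exists x y, [/\ s0 = enc x, s1 = enc y & size x = (count (pred1 b) y).+1]
  | 2 => s0 = [:: None] /\ s1 = [::]
  | _ => s0 = [::] /\ s1 = [::] end.

Lemma size_eq_count_inv_step c c' : step c c' -> size_eq_count_inv c' -> size_eq_count_inv c.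
Proof.
case=> [//|q q' r ch rest Ht Hr].
case: q Ht Hr => [[|[|[|[|k]]]] Hq] //; case: q' => [[|[|[|[|k']]]] Hq'] //;
  case: ch => [a|] //; rewrite /size_eq_count_inv /upd /= => Ht ->.
- by case=> x [y [-> -> S]]; exists x, (a :: y); rewrite /= (negbTE Ht).
- by case=> x [y [-> -> S]]; exists x, (a :: y); rewrite /= Ht.
- by case=> -> ->; exists [::], [::].
- by case=> x [y [-> -> S]]; exists (a :: x), y; rewrite /= S.
- by case=> -> ->.
Qed.

Local Notation read0 := (reach_read0 (M := size_eq_count_nssa)).
Local Notation read1 := (reach_read1 (M := size_eq_count_nssa)).

Lemma size_eq_count_run x y : size x = count (pred1 b) y ->
  reach (M := size_eq_count_nssa) (s 0, tapes2 (enc x) (enc y)) (s 3, fun _ => [::]).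
Proof.
elim: y x => [|a y IH] x /= S.
  case: x S => // _; rewrite enc0; apply: (read1 (s 2)) => //.
  by apply: (read0 (s 3)) => //; rewrite tapes2_nil; apply: reach_refl.
rewrite encS; case: (eqVneq a b) S => [->|Nab]; rewrite ?eqxx ?(negbTE Nab) => S.
  case: x S => // c x [S]; rewrite encS; apply: (read1 (s 1)); rewrite /= ?eqxx //.
  by apply: (read0 (s 0)) => //; apply: IH.
by apply: (read1 (s 0)); rewrite /= ?Nab //; apply: IH.
Qed.

Lemma accepts_size_eq_count w : accepts size_eq_count_nssa w <-> size_eq_count w.
Proof.
split.
  move=> [q0 [qf [Hs [Ha Hr]]]].
  have := reach_backward size_eq_count_inv_step Hr.
  rewrite /size_eq_count_inv /size_eq_count /= (eqP Hs) tape_input2 /tapes2 /=.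
  case=> [|x [y [/enc_inj -> /enc_inj -> //]]].
  by case: qf {Hr} Ha => [[|[|[|k]]] ?].
move=> H; exists (s 0), (s 3); do 2!split => //.
by rewrite tape_input2; apply: size_eq_count_run.
Qed.
End CountEq.

Section CountNeq.
Variable b : bool.
Local Notation s k := (@Ordinal 6 k isT).

(* As [size_eq_count_nssa], but accepting when x runs out early (state 4) or still has a
   letter left when y ends (state 2). *)
Definition size_neq_count_nssa : nssa bool 2 := @NSSA bool 2 'I_6
  (fun q => val q == 0) (fun q => val q == 5)
  (fun q => if (val q == 0) || (val q == 4) then tape1 else ord0) (fun _ _ => false)
  (fun q c q' => match val q, c, val q' with
    | 0, Some a, 0 => a != b
    | 0, Some a, 1 => a == b
    | 0, None, 2 => true
    | 1, Some _, 0 => true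
    | 1, None, 4 => true
    | 2, Some _, 3 => true
    | 3, Some _, 3 => true
    | 3, None, 5 => true
    | 4, Some _, 4 => true
    | 4, None, 5 => true
    | _, _, _ => false end).

Definition size_neq_count (w : 'I_2 -> seq bool) := size (w ord0) <> count (pred1 b) (w tape1).

Definition size_neq_count_inv (c : config size_neq_count_nssa) : Prop :=
  let s0 := c.2 ord0 in let s1 := c.2 tape1 in
  match val c.1 with
  | 0 => exists x y, [/\ s0 = enc x, s1 = enc y & size x != count (pred1 b) y]
  | 1 => exists x y, [/\ s0 = enc x, s1 = enc y & size x != (count (pred1 b) y).+1]
  | 2 => s1 = [::] /\ exists2 x, s0 = enc x & 0 < size x
  | 3 => s1 = [::] /\ exists x, s0 = enc x
  | 4 => s0 = [::] /\ exists y, s1 = enc y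
  | _ => s0 = [::] /\ s1 = [::] end.

Lemma size_neq_count_inv_step c c' : step c c' -> size_neq_count_inv c' -> size_neq_count_inv c.
Proof.
case=> [//|q q' r ch rest Ht Hr].
case: q Ht Hr => [[|[|[|[|[|[|k]]]]]] Hq] //; case: q' => [[|[|[|[|[|[|k']]]]]] Hq'] //;
  case: ch => [a|] //; rewrite /size_neq_count_inv /upd /= => Ht ->.
- by case=> x [y [-> -> S]]; exists x, (a :: y); rewrite /= (negbTE Ht).
- by case=> x [y [-> -> S]]; exists x, (a :: y); rewrite /= Ht.
- by case=> -> [x -> S]; exists x, [::]; rewrite /= -lt0n.
- by case=> x [y [-> -> S]]; exists (a :: x), y.
- by case=> -> [y ->]; exists [::], y.
- by case=> -> [x ->]; split => //; exists (a :: x).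
- by case=> -> [x ->]; split => //; exists (a :: x).
- by case=> -> ->; split => //; exists [::].
- by case=> -> [y ->]; split => //; exists (a :: y).
- by case=> -> ->; split => //; exists [::].
Qed.

Local Notation read0 := (reach_read0 (M := size_neq_count_nssa)).
Local Notation read1 := (reach_read1 (M := size_neq_count_nssa)).

Lemma size_neq_count_run_x x :
  reach (M := size_neq_count_nssa) (s 3, tapes2 (enc x) [::]) (s 5, fun _ => [::]).
Proof.
elim: x => [|a x IH]; rewrite ?enc0 ?encS; last exact: (read0 (s 3)).
by apply: (read0 (s 5)) => //; rewrite tapes2_nil; apply: reach_refl.
Qed.

Lemma size_neq_count_run_y y :
  reach (M := size_neq_count_nssa) (s 4, tapes2 [::] (enc y)) (s 5, fun _ => [::]).
Proof.
elim: y => [|a y IH]; rewrite ?enc0 ?encS; last exact: (read1 (s 4)).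
by apply: (read1 (s 5)) => //; rewrite tapes2_nil; apply: reach_refl.
Qed.

Lemma size_neq_count_run x y : size x != count (pred1 b) y ->
  reach (M := size_neq_count_nssa) (s 0, tapes2 (enc x) (enc y)) (s 5, fun _ => [::]).
Proof.
elim: y x => [|a y IH] x /= S.
  case: x S => // c x _; rewrite enc0 encS; apply: (read1 (s 2)) => //.
  exact: (read0 (s 3)) (size_neq_count_run_x x).
rewrite encS; case: (eqVneq a b) S => [->|Nab]; rewrite ?eqxx ?(negbTE Nab) => S.
  apply: (read1 (s 1)); rewrite /= ?eqxx //.
  case: x S => [|c x] S; rewrite ?enc0 ?encS.
    exact: (read0 (s 4)) (size_neq_count_run_y y).
  by apply: (read0 (s 0)) => //; apply: IH.
by apply: (read1 (s 0)); rewrite /= ?Nab //; apply: IH.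
Qed.

Lemma accepts_size_neq_count w : accepts size_neq_count_nssa w <-> size_neq_count w.
Proof.
split.
  move=> [q0 [qf [Hs [Ha Hr]]]].
  have := reach_backward size_neq_count_inv_step Hr.
  rewrite /size_neq_count_inv /size_neq_count /= (eqP Hs) tape_input2 /tapes2 /=.
  case=> [|x [y [/enc_inj -> /enc_inj -> /eqP //]]].
  by case: qf {Hr} Ha => [[|[|[|[|[|[|k]]]]]] ?].
move=> /eqP H; exists (s 0), (s 5); do 2!split => //.
by rewrite tape_input2; apply: size_neq_count_run.
Qed.
End CountNeq.

Lemma fcons_tape1 (T : Type) (x1 : seq T) (x : 'I_1 -> seq T) : fcons x1 x tape1 = x ord0.
Proof. by rewrite (_ : tape1 = lift ord0 ord0) ?fconsS //; apply: val_inj. Qed.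

Lemma count_pred1_true s : count (pred1 true) s = count id s.
Proof. by apply: eq_count => -[]. Qed.

Lemma count_pred1_false s : count (pred1 false) s = count negb s.
Proof. by apply: eq_count => -[]. Qed.

Lemma weakly_regular_size_eq_count b : weakly_regular (size_eq_count b).
Proof. by exists (size_eq_count_nssa b) => w; rewrite accepts_size_eq_count. Qed.

Lemma weakly_regular_size_neq_count b : weakly_regular (size_neq_count b).
Proof. by exists (size_neq_count_nssa b) => w; rewrite accepts_size_neq_count. Qed.

Lemma not_weakly_regular_size_eq_count_and :
  ~ weakly_regular (fun w => size_eq_count true w /\ size_eq_count false w).
Proof.
move/(@weakly_regular_exists _ 1 isT) => H; apply: balanced_not_weakly_regular.
apply: weakly_regular_ext H => x.
rewrite /size_eq_count /balanced; split.
  by case=> x1; rewrite !fcons0 !fcons_tape1 count_pred1_true count_pred1_false => -[<- <-].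
move=> E; exists (nseq (count id (x ord0)) true).
by rewrite !fcons0 !fcons_tape1 count_pred1_true count_pred1_false size_nseq.
Qed.

Lemma not_weakly_regular_forall_size_eq_or_neq_count : ~ weakly_regular
  (fun x : 'I_1 -> seq bool =>
     forall x1, size_eq_count true (fcons x1 x) \/ size_neq_count false (fcons x1 x)).
Proof.
move=> H; apply: balanced_not_weakly_regular; apply: weakly_regular_ext H => x.
rewrite /size_eq_count /size_neq_count /balanced.
split.
  move/(_ (nseq (count negb (x ord0)) true)).
  by rewrite !fcons0 !fcons_tape1 count_pred1_true count_pred1_false size_nseq; case.
move=> E x1; rewrite !fcons0 !fcons_tape1 count_pred1_true count_pred1_false -E.
by case: (eqVneq (size x1) (count id (x ord0))) => [|/eqP]; [left|right].
Qed.

Lemma weakly_regular_and_of_not (A : finType) n :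
  (forall P : lang A n, weakly_regular P -> weakly_regular (fun w => ~ P w)) ->
  forall P Q : lang A n, weakly_regular P -> weakly_regular Q ->
  weakly_regular (fun w => P w /\ Q w).
Proof.
move=> compl P Q HP HQ.
apply: weakly_regular_ext (compl _ (weakly_regular_or (compl _ HP) (compl _ HQ))) => w.
by split=> [H|[p q] [] //]; split; apply: NNPP => ?; apply: H; [left|right].
Qed.

Theorem mainTheorem5 :
  (* (a) complement *)
  (exists (A : finType) (n : nat) (P : lang A n),
      1 <= n /\ weakly_regular P /\ ~ weakly_regular (fun w => ~ P w)) /\
  (* (b) union *)
  (forall (A : finType) (n : nat), 1 <= n ->
     forall P Q : lang A n, weakly_regular P -> weakly_regular Q ->
       weakly_regular (fun w => P w \/ Q w)) /\
  (* (c) intersection *)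
  (exists (A : finType) (n : nat) (P Q : lang A n),
      1 <= n /\ weakly_regular P /\ weakly_regular Q /\
      ~ weakly_regular (fun w => P w /\ Q w)) /\
  (* (d) existential projection, arity n.+1 >= 2 *)
  (forall (A : finType) (n : nat), 1 <= n ->
     forall P : lang A n.+1, weakly_regular P ->
       weakly_regular (fun x : 'I_n -> seq A => exists x1, P (fcons x1 x))) /\
  (* (e) universal projection, arity n.+1 >= 2 *)
  (exists (A : finType) (n : nat) (P : lang A n.+1),
      1 <= n /\ weakly_regular P /\
      ~ weakly_regular (fun x : 'I_n -> seq A => forall x1, P (fcons x1 x))).
Proof.
split; last split; last split; last split.
- apply: NNPP => no_witness.
  have compl (P : lang bool 2) : weakly_regular P -> weakly_regular (fun w => ~ P w).
    by move=> HP; apply: NNPP => HnP; apply: no_witness; exists bool, 2, P.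
  apply: not_weakly_regular_size_eq_count_and.
  exact: weakly_regular_and_of_not compl _ _
    (weakly_regular_size_eq_count _) (weakly_regular_size_eq_count _).
- by move=> A n _ P Q; apply: weakly_regular_or.
- exists bool, 2, (size_eq_count true), (size_eq_count false).
  split=> //; split; [|split]; try exact: weakly_regular_size_eq_count.
  exact: not_weakly_regular_size_eq_count_and.
- exact: weakly_regular_exists.
- exists bool, 1, (fun w => size_eq_count true w \/ size_neq_count false w).
  split=> //; split.
    exact: weakly_regular_or (weakly_regular_size_eq_count _) (weakly_regular_size_neq_count _).
  exact: not_weakly_regular_forall_size_eq_or_neq_count.
Qed.
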